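(* Let $N\ge 1$ be an integer and $h,g>0$ real numbers. For $k\in\{0,1,\dots,N\}$ and $\Delta>0$ define $$R_k(\Delta):=\log\Big(1+(N-k)\frac{h^2}{1+\Delta}\Big)+\log(1+kg^2)-k\log\Big(\frac{1+\Delta}{\Delta}\Big)$$ (logarithms base $2$). For $i\in\{0,\dots,N-1\}$ let $\Delta^*_{(i)(i+1)}$ be the unique positive solution of $R_i(\Delta)=R_{i+1}(\Delta)$. Then $\Delta^*_{(i)(i+1)}$ is non-decreasing in $i$, i.e. $\Delta^*_{01}\le\Delta^*_{12}\le\cdots\le\Delta^*_{(N-1)(N)}$.
   Context: $R_k(\Delta)$ is the quantize-map-and-forward rate of a cut containing $k$ relays in the symmetric $N$-relay diamond network (all source-relay magnitudes equal $h$, all relay-destination magnitudes equal $g$) when every relay uses Gaussian quantization distortion $\Delta$. The equation $R_i(\Delta)=R_{i+1}(\Delta)$ has exactly one positive solution for each $i$. *)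

From Stdlib Require Import Reals.
Open Scope R_scope.

Definition log2 (x : R) : R := ln x / ln 2.

(* QMF rate of a cut containing k relays (symmetric N-relay diamond network),
   R_k(D) = log(1+(N-k) h^2/(1+D)) + log(1+k g^2) - k log((1+D)/D). *)
Definition Rk (N k : nat) (h g D : R) : R :=
  log2 (1 + INR (N - k) * h ^ 2 / (1 + D)) + log2 (1 + INR k * g ^ 2)
  - INR k * log2 ((1 + D) / D).

(** Up to the factor 1/log 2, R_k(D) - R_(k+1)(D) = S_(N-k-1)(D) - L_k with
      L_k    = log(1 + (k+1) g^2) - log(1 + k g^2),
      S_m(D) = log(1 + (m+1) t) - log(1 + m t) + log((1+D)/D),  t = h^2/(1+D).
    By concavity of x |-> log(1 + x t), the increment log(1 + (m+1) t) - log(1 + m t)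
    is non-increasing in m and non-decreasing in t, so L_k is non-increasing in k,
    S_m is non-increasing in m, and S_m is strictly decreasing in D.  With
    m = N-i-2, if D*_(i)(i+1) > D*_(i+1)(i+2) then
      L_(i+1) = S_m(D*_(i+1)(i+2)) > S_m(D*_(i)(i+1)) >= S_(m+1)(D*_(i)(i+1)) = L_i >= L_(i+1). *)

From Stdlib Require Import Reals Lra Lia.
From Coquelicot Require Import Rcomplements.
Open Scope R_scope.

Lemma ln_sub_le a b c d : 0 < a -> 0 < b -> 0 < c -> 0 < d ->
  a * d <= c * b -> ln a - ln b <= ln c - ln d.
Proof.
  intros Ha Hb Hc Hd Hle.
  enough (ln (a * d) <= ln (c * b)) by (rewrite !ln_mult in * by lra; lra).
  apply ln_le; [apply Rmult_lt_0_compat|]; lra.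
Qed.

Definition log_increment (m t : R) : R := ln (1 + (m + 1) * t) - ln (1 + m * t).

Lemma log_increment_le_t m t1 t2 : 0 <= m -> 0 <= t1 -> t1 <= t2 ->
  log_increment m t1 <= log_increment m t2.
Proof. intros; apply ln_sub_le; nra. Qed.

Lemma log_increment_antitone_m m1 m2 t : 0 <= m1 -> m1 <= m2 -> 0 <= t ->
  log_increment m2 t <= log_increment m1 t.
Proof. intros; apply ln_sub_le; nra. Qed.

Definition source_gain (m H D : R) : R :=
  log_increment m (H / (1 + D)) + ln ((1 + D) / D).

Lemma source_gain_decreasing m H D1 D2 : 0 <= m -> 0 <= H -> 0 < D2 -> D2 < D1 ->
  source_gain m H D1 < source_gain m H D2.
Proof.
  intros Hm HH HD2 HD.
  assert (Ht : H / (1 + D1) <= H / (1 + D2)).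
  { apply Rmult_le_compat_l; [lra|]. apply Rinv_le_contravar; lra. }
  assert (Ht0 : 0 <= H / (1 + D1)) by (apply Rdiv_le_0_compat; lra).
  assert (Hc : (1 + D1) / D1 < (1 + D2) / D2).
  { replace ((1 + D1) / D1) with (1 + / D1) by (field; lra).
    replace ((1 + D2) / D2) with (1 + / D2) by (field; lra).
    apply Rplus_lt_compat_l, Rinv_0_lt_contravar; lra. }
  assert (Hc0 : 0 < (1 + D1) / D1) by (apply Rdiv_lt_0_compat; lra).
  unfold source_gain.
  pose proof (log_increment_le_t m _ _ Hm Ht0 Ht).
  pose proof (ln_increasing _ _ Hc0 Hc).
  lra.
Qed.

Lemma source_gain_antitone_m m1 m2 H D : 0 <= m1 -> m1 <= m2 -> 0 <= H -> 0 < D ->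
  source_gain m2 H D <= source_gain m1 H D.
Proof.
  intros Hm1 Hm HH HD. unfold source_gain.
  apply Rplus_le_compat_r, log_increment_antitone_m; try lra.
  apply Rdiv_le_0_compat; lra.
Qed.

Lemma Rk_sub_succ N k h g D : (k + 1 <= N)%nat -> 0 < D ->
  Rk N k h g D - Rk N (k + 1) h g D =
  (source_gain (INR (N - (k + 1))) (h ^ 2) D - log_increment (INR k) (g ^ 2)) / ln 2.
Proof.
  intros Hk HD.
  assert (Hln2 : 0 < ln 2) by (pose proof ln_lt_2; lra).
  unfold Rk, source_gain, log_increment, log2.
  replace (N - k)%nat with (N - (k + 1) + 1)%nat by lia.
  rewrite !plus_INR; simpl INR.
  set (m := INR (N - (k + 1))).
  replace ((m + 1) * h ^ 2 / (1 + D)) with ((m + 1) * (h ^ 2 / (1 + D))) by (field; lra).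
  replace (m * h ^ 2 / (1 + D)) with (m * (h ^ 2 / (1 + D))) by (field; lra).
  field; lra.
Qed.

Lemma crossing_points_ordered m y H G D1 D2 :
  0 <= m -> 0 <= y -> 0 <= H -> 0 <= G -> 0 < D1 -> 0 < D2 ->
  source_gain (m + 1) H D1 = log_increment y G ->
  source_gain m H D2 = log_increment (y + 1) G ->
  D1 <= D2.
Proof.
  intros Hm Hy HH HG HD1 HD2 E1 E2.
  apply Rnot_lt_le; intros HD.
  pose proof (source_gain_decreasing m H D1 D2 Hm HH HD2 HD).
  pose proof (source_gain_antitone_m m (m + 1) H D1 Hm ltac:(lra) HH HD1).
  pose proof (log_increment_antitone_m y (y + 1) G Hy ltac:(lra) HG).
  lra.
Qed.

Lemma Rk_eq_succ N k h g D : (k + 1 <= N)%nat -> 0 < D ->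
  Rk N k h g D = Rk N (k + 1) h g D ->
  source_gain (INR (N - (k + 1))) (h ^ 2) D = log_increment (INR k) (g ^ 2).
Proof.
  intros Hk HD E.
  assert (Hln2 : 0 < ln 2) by (pose proof ln_lt_2; lra).
  pose proof (Rk_sub_succ N k h g D Hk HD) as Hsub.
  rewrite E, Rminus_diag in Hsub.
  apply Rminus_diag_uniq_sym, (Rmult_eq_reg_r (/ ln 2)).
  - unfold Rdiv in Hsub. lra.
  - apply Rinv_neq_0_compat; lra.
Qed.

Theorem lemma4 (N : nat) (h g : R) (i : nat) (D1 D2 : R) :
  (1 <= N)%nat -> 0 < h -> 0 < g -> (i + 2 <= N)%nat ->
  0 < D1 -> Rk N i h g D1 = Rk N (i + 1) h g D1 ->
  0 < D2 -> Rk N (i + 1) h g D2 = Rk N (i + 2) h g D2 ->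
  D1 <= D2.
Proof.
  intros _ Hh Hg Hi HD1 E1 HD2 E2.
  replace (i + 2)%nat with (i + 1 + 1)%nat in E2 by lia.
  apply Rk_eq_succ in E1, E2; try lia; try lra.
  replace (N - (i + 1))%nat with (N - (i + 1 + 1) + 1)%nat in E1 by lia.
  rewrite plus_INR in E1, E2; simpl INR in E1, E2.
  apply (crossing_points_ordered (INR (N - (i + 1 + 1))) (INR i) (h ^ 2) (g ^ 2));
    auto using pos_INR, pow2_ge_0.
Qed.
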